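(* Let $\ell^\infty\neq0$ be a complex constant. For $k\in\{1,2\}$ let $\Sigma^{(k)}$ be finite disjoint index sets, and for $\alpha\in\Sigma^{(k)}$ let $m_\alpha\ge1$, $z_\alpha\in\mathbb C$ (pairwise distinct within each $\Sigma^{(k)}$), and $\ell^\alpha_{[p]}\in\mathbb C$ ($0\le p\le m_\alpha-1$) with $\ell^\alpha_{[m_\alpha-1]}\neq0$. Let $\chi_k(z)=\sum_{\alpha\in\Sigma^{(k)}}\sum_{p=0}^{m_\alpha-1}\frac{\ell^\alpha_{[p]}}{(z-z_\alpha)^{p+1}}$, $\varphi_k=\chi_k-\ell^\infty$, $M_k=\sum_{\alpha\in\Sigma^{(k)}}m_\alpha$, $M=M_1+M_2$, and assume the zeros $\zeta^{(1)}_i$ ($1\le i\le M_1$) of $\varphi_1$ and $\zeta^{(2)}_i$ ($M_1<i\le M$) of $\varphi_2$ are simple. For $\gamma\neq0$ let $\varphi_{1\otimes2,\gamma}(z)=\chi_1(z)+\chi_2(z-\gamma^{-1})-\ell^\infty$, and for $\gamma$ small let $\zeta_i(\gamma)$ be its zeros labelled so that $\zeta_i(\gamma)=\zeta^{(1)}_i+O(\gamma)$ for $i\le M_1$ and $\zeta_i(\gamma)=\gamma^{-1}+\zeta^{(2)}_i+O(\gamma)$ for $i>M_1$. Then for each $i\in\{1,\dots,M\}$, $\varphi_{1\otimes2,\gamma}'(\zeta_i(\gamma))=\varphi_k'(\zeta^{(k)}_i)+O(\gamma)$, with $k=1$ if $i\le M_1$ and $k=2$ if $i>M_1$. *)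

From HB Require Import structures.
From mathcomp Require Import all_boot all_order all_algebra.
From mathcomp Require Import complex.
From mathcomp Require Import all_classical all_reals all_analysis.
Set Implicit Arguments. Unset Strict Implicit. Unset Printing Implicit Defensive.
Import Order.TTheory GRing.Theory Num.Theory.
Import numFieldNormedType.Exports.
Local Open Scope ring_scope.

Definition chi (C : fieldType) (n : nat) (m : 'I_n -> nat) (z : 'I_n -> C)
  (l : 'I_n -> nat -> C) (x : C) : C :=
  \sum_(a < n) \sum_(p < m a) l a p / (x - z a) ^+ p.+1.

Definition is_pole (C : fieldType) (n : nat) (z : 'I_n -> C) (x : C) : Prop :=
  exists a : 'I_n, x = z a.

Definition total_mult (n : nat) (m : 'I_n -> nat) : nat := (\sum_(a < n) m a)%N.

(* Equip the complex numbers R[i] with their standard normed-module structure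
   over themselves (the same instances MathComp-Analysis provides for a
   generic numFieldType via numFieldNormedType), so that derive1 is the usual
   complex derivative. *)
Section complex_normed.
Variable R : rcfType.
HB.instance Definition _ := GRing.ComAlgebra.copy R[i] (R[i])^o.
HB.instance Definition _ := Vector.copy R[i] (R[i])^o.
HB.instance Definition _ := NormedModule.copy R[i] (R[i])^o.
End complex_normed.

From HB Require Import structures.
From mathcomp Require Import all_boot all_order all_algebra.
From mathcomp Require Import complex.
From mathcomp Require Import all_classical all_reals all_analysis.
From mathcomp Require Import ring lra.
Set Implicit Arguments. Unset Strict Implicit. Unset Printing Implicit Defensive.
Import Order.TTheory GRing.Theory Num.Theory.
Import numFieldNormedType.Exports.
Import Normc.
Local Open Scope ring_scope.
Local Open Scope complex_scope.

(* Away from the poles, the derivative of phi_{1(x)2,gamma} at x is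
   chi_1'(x) + chi_2'(x - 1/gamma), with chi_k' the explicit sum [dchi] of the
   derivatives of the polar terms.  Along a family of zeros
   zeta(gamma) = zeta^(1)_i + O(gamma), the point zeta^(1)_i stays at positive
   distance r from the poles of chi_1, and on the set of points at distance
   at least r/2 from these poles chi_1' is Lipschitz, so
   chi_1'(zeta(gamma)) = phi_1'(zeta^(1)_i) + O(gamma).  Meanwhile
   zeta(gamma) - 1/gamma lies at distance of order 1/|gamma| from every pole of
   chi_2, and chi_2'(x) = O(1/|x|^2) far from the poles, so the second term is
   O(gamma^2).  The zeros near 1/gamma + zeta^(2)_i are treated in the same way
   with the roles of chi_1 and chi_2 exchanged.  Only the labelling of the
   zeros and the fact that zeta^(k)_i is not a pole are used; the other
   hypotheses serve to guarantee that such labellings exist. *)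

Section ComplexModulus.
Variable R : rcfType.
Implicit Types x y : R[i].

Lemma normcE x : `|x| = (normc x)%:C.
Proof. by case: x. Qed.

Lemma normc_ge0 x : 0 <= normc x.
Proof. by rewrite -lecR -normcE normr_ge0. Qed.

Lemma normc_gt0 x : (0 < normc x) = (x != 0).
Proof. by rewrite -ltcR -normcE normr_gt0. Qed.

Lemma normcD x y : normc (x + y) <= normc x + normc y.
Proof. by rewrite -lecR rmorphD /= -!normcE ler_normD. Qed.

Lemma normcN x : normc (- x) = normc x.
Proof. by apply: complexI; rewrite -!normcE normrN. Qed.

Lemma distcC x y : normc (x - y) = normc (y - x).
Proof. by rewrite -normcN opprB. Qed.

Lemma normcX x n : normc (x ^+ n) = normc x ^+ n.
Proof. by apply: complexI; rewrite rmorphXn /= -!normcE normrX. Qed.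

Lemma normc_nat n : normc n%:R = n%:R :> R.
Proof. by apply: complexI; rewrite -normcE normr_nat rmorph_nat. Qed.

Lemma normcMn x n : normc (x *+ n) = normc x *+ n.
Proof. by apply: complexI; rewrite rmorphMn /= -!normcE normrMn. Qed.

Lemma normc_sum I (r : seq I) (P : pred I) (F : I -> R[i]) :
  normc (\sum_(i <- r | P i) F i) <= \sum_(i <- r | P i) normc (F i).
Proof.
elim/big_rec2: _ => [|i y x _ le_xy]; first by rewrite normc0.
by apply: le_trans (normcD _ _) _; rewrite lerD2l.
Qed.

End ComplexModulus.

Section InversePowerBounds.
Variable R : rcfType.
Implicit Types u v : R[i].

Lemma normc_subXX (s : R) u v n : normc u <= s -> normc v <= s ->
  normc (u ^+ n.+1 - v ^+ n.+1) <= n.+1%:R * s ^+ n * normc (u - v).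
Proof.
move=> us vs; have s0 : 0 <= s := le_trans (normc_ge0 u) us.
have term_le (i : 'I_n.+1) : normc (u ^+ (n - i) * v ^+ i) <= s ^+ n.
  have -> : s ^+ n = s ^+ (n - i) * s ^+ i by rewrite -exprD subnK // -ltnS.
  rewrite normcM !normcX.
  by apply: ler_pM; rewrite ?exprn_ge0 ?normc_ge0 // lerXn2r ?nnegrE ?normc_ge0.
rewrite subrXX normcM mulrC ler_wpM2r ?normc_ge0 //.
apply: le_trans (normc_sum _ _ _) _.
apply: le_trans (ler_sum _ (fun i _ => term_le i)) _.
by rewrite sumr_const card_ord mulr_natl.
Qed.

Lemma normc_subVX (r : R) u v n : 0 < r -> r <= normc u -> r <= normc v ->
  normc (u ^- n.+1 - v ^- n.+1) <= n.+1%:R * r^-1 ^+ n.+2 * normc (u - v).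
Proof.
move=> r0 ru rv; have s0 : 0 <= r^-1 by rewrite invr_ge0 ltW.
have inv_le w : r <= normc w -> w != 0 /\ normc w^-1 <= r^-1.
  move=> rw; have w0 : 0 < normc w := lt_le_trans r0 rw.
  by rewrite -normc_gt0 normcV lef_pV2 ?posrE.
have [u0 us] := inv_le _ ru; have [v0 vs] := inv_le _ rv.
have inv_sub : normc (u^-1 - v^-1) <= r^-1 ^+ 2 * normc (u - v).
  have -> : u^-1 - v^-1 = (v - u) * (u^-1 * v^-1) by field; rewrite u0 v0.
  rewrite !normcM distcC mulrC expr2 ler_wpM2r ?normc_ge0 //.
  by rewrite ler_pM ?normc_ge0.
have := normc_subXX n us vs; rewrite (exprVn u) (exprVn v) => /le_trans; apply.
apply: le_trans (ler_wpM2l _ inv_sub) _; first by rewrite mulr_ge0 ?exprn_ge0.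
by rewrite mulrA -(mulrA _ (r^-1 ^+ n)) -exprD addn2.
Qed.

Lemma normc_VX_le (rho : R) u n : 1 <= rho -> rho <= normc u ->
  normc (u ^- n.+2) <= rho^-1 ^+ 2.
Proof.
move=> rho1 rhou; have rho0 : 0 < rho := lt_le_trans ltr01 rho1.
have us : normc u^-1 <= rho^-1.
  by rewrite normcV lef_pV2 ?posrE ?(lt_le_trans rho0).
have s0 : 0 <= rho^-1 by rewrite invr_ge0 ltW.
have := lerXn2r n.+2 (normc_ge0 u^-1) s0 us; rewrite -normcX (exprVn u) => /le_trans.
by apply; apply: ler_wiXn2l; rewrite // invf_le1.
Qed.

End InversePowerBounds.

Definition dchi (C : fieldType) (n : nat) (m : 'I_n -> nat) (z : 'I_n -> C)
    (l : 'I_n -> nat -> C) (x : C) : C :=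
  \sum_(a < n) \sum_(p < m a) - (l a p *+ p.+1) / (x - z a) ^+ p.+2.

Section ShiftPoles.
Variables (C : fieldType) (n : nat) (m : 'I_n -> nat) (z : 'I_n -> C).
Variables (l : 'I_n -> nat -> C) (c : C).

Lemma chi_shift x : chi m z l (x - c) = chi m (fun a => z a + c) l x.
Proof. by apply: eq_bigr => a _; apply: eq_bigr => p _; rewrite opprD addrA addrAC. Qed.

Lemma dchi_shift x : dchi m z l (x - c) = dchi m (fun a => z a + c) l x.
Proof. by apply: eq_bigr => a _; apply: eq_bigr => p _; rewrite opprD addrA addrAC. Qed.

End ShiftPoles.

Lemma is_derive_inv (K : numFieldType) (f : K -> K) (x v t : K) :
  f x != 0 -> is_derive x v f t -> is_derive x v (fun y => (f y)^-1) (- (f x) ^- 2 *: t).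
Proof. by move=> fx0 [df <-]; apply: DeriveDef; [exact: derivableV | exact: deriveV]. Qed.

Section Derivative.
Variable R : rcfType.

Lemma is_derive_inv_pow (c w x : R[i]) k : x != w ->
  is_derive x 1 (fun y => c / (y - w) ^+ k.+1) (- (c *+ k.+1) / (x - w) ^+ k.+2).
Proof.
move=> xw; have xw0 : x - w != 0 by rewrite subr_eq0.
have dpow : is_derive x 1 (fun y => (y - w) ^+ k.+1) (k.+1%:R * (x - w) ^+ k).
  have := is_deriveX k.+1 (is_derive_shift x 1 (- w)).
  by rewrite exprfctE [_%:A]mulr1.
have dinv := is_derive_inv (f := fun y => (y - w) ^+ k.+1) (expf_neq0 k.+1 xw0) dpow.
apply: is_derive_eq (is_deriveZ c dinv) _.
rewrite /GRing.scale /= !exprS -mulr_natr.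
by field; rewrite expf_neq0 xw0.
Qed.

Variables (n : nat) (m : 'I_n -> nat) (z : 'I_n -> R[i]) (l : 'I_n -> nat -> R[i]).

Lemma is_derive_chi x : ~ is_pole z x -> is_derive x 1 (chi m z l) (dchi m z l x).
Proof.
move=> xz; rewrite /chi /dchi -!fct_sumE; apply: is_derive_sum => a.
rewrite -fct_sumE; apply: is_derive_sum => p; apply: is_derive_inv_pow.
by apply/eqP => xza; apply: xz; exists a.
Qed.

Lemma derive1_chi_subr x c : ~ is_pole z x ->
  derive1 (fun y => chi m z l y - c) x = dchi m z l x.
Proof.
move=> xz; rewrite derive1E.
have := is_deriveB (is_derive_chi xz) (is_derive_cst c x 1); rewrite subr0.
by move=> dphi; exact: derive_val.
Qed.

End Derivative.

Lemma derive1_chi_add_shift (R : rcfType) n1 (m1 : 'I_n1 -> nat) (z1 : 'I_n1 -> R[i])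
    (l1 : 'I_n1 -> nat -> R[i]) n2 (m2 : 'I_n2 -> nat) (z2 : 'I_n2 -> R[i])
    (l2 : 'I_n2 -> nat -> R[i]) (c s x : R[i]) :
  ~ is_pole z1 x -> ~ is_pole z2 (x - s) ->
  derive1 (fun y => chi m1 z1 l1 y + chi m2 z2 l2 (y - s) - c) x
  = dchi m1 z1 l1 x + dchi m2 z2 l2 (x - s).
Proof.
move=> xz1 xz2; have xz2' : ~ is_pole (fun a => z2 a + s) x.
  by move=> [a xa]; apply: xz2; exists a; rewrite xa addrK.
under eq_fun do rewrite chi_shift.
rewrite derive1E dchi_shift.
have := is_deriveB (is_deriveD (is_derive_chi m1 l1 xz1) (is_derive_chi m2 l2 xz2'))
  (is_derive_cst c x 1).
by rewrite subr0 => dphi; exact: derive_val.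
Qed.

Section DchiBounds.
Variables (R : rcfType) (n : nat) (m : 'I_n -> nat) (z : 'I_n -> R[i]).
Variable l : 'I_n -> nat -> R[i].

Lemma dchi_lipschitz (r : R) : 0 < r -> exists2 L : R, 0 <= L &
  forall x y, (forall a, r <= normc (x - z a)) -> (forall a, r <= normc (y - z a)) ->
  normc (dchi m z l x - dchi m z l y) <= L * normc (x - y).
Proof.
move=> r0; have s0 : 0 <= r^-1 by rewrite invr_ge0 ltW.
exists (\sum_a \sum_(p < m a) normc (l a p) * p.+1%:R * p.+2%:R * r^-1 ^+ p.+3).
  by do 2!(apply: sumr_ge0 => ? _); do ![apply: exprn_ge0 | apply: mulr_ge0]; rewrite ?normc_ge0 ?ler0n.
move=> x y xz yz; rewrite /dchi -sumrB mulr_suml.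
apply: le_trans (normc_sum _ _ _) (ler_sum _ _) => a _.
rewrite -sumrB mulr_suml; apply: le_trans (normc_sum _ _ _) (ler_sum _ _) => p _.
have := normc_subVX p.+1 r0 (xz a) (yz a); rewrite opprB addrA subrK => sub_le.
rewrite -mulrBr normcM normcN normcMn.
apply: le_trans (ler_wpM2l _ sub_le) _; first by rewrite mulrn_wge0 ?normc_ge0.
by rewrite -[_ *+ p.+1]mulr_natr !mulrA.
Qed.

Lemma dchi_decay : exists2 D : R, 0 <= D &
  forall x (rho : R), 1 <= rho -> (forall a, rho <= normc (x - z a)) ->
  normc (dchi m z l x) <= D * rho^-1 ^+ 2.
Proof.
exists (\sum_a \sum_(p < m a) normc (l a p) * p.+1%:R).
  by do 2!(apply: sumr_ge0 => ? _); rewrite mulr_ge0 ?normc_ge0 ?ler0n.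
move=> x rho rho1 xz; rewrite /dchi mulr_suml.
apply: le_trans (normc_sum _ _ _) (ler_sum _ _) => a _.
rewrite mulr_suml; apply: le_trans (normc_sum _ _ _) (ler_sum _ _) => p _.
rewrite normcM normcN normcMn -[_ *+ p.+1]mulr_natr ler_wpM2l ?mulr_ge0 ?normc_ge0 ?ler0n //.
exact: normc_VX_le.
Qed.

End DchiBounds.

Section BigONearZero.
Variable R : rcfType.
Implicit Types (P Q : R[i] -> Prop) (f h y o : R[i] -> R[i]).

Definition near0 P := exists2 d : R, 0 < d & forall g, 0 < normc g < d -> P g.

Definition bigO0 f := exists2 K : R, 0 <= K & near0 (fun g => normc (f g) <= K * normc g).

Lemma near0_and P Q : near0 P -> near0 Q -> near0 (fun g => P g /\ Q g).
Proof.
move=> [d1 d1_gt0 P1] [d2 d2_gt0 Q2]; exists (Num.min d1 d2) => [|g].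
  by rewrite lt_min d1_gt0.
by rewrite lt_min => /and3P[g0 gd1 gd2]; split; [apply: P1 | apply: Q2]; rewrite g0.
Qed.

Lemma near0_mono P Q : (forall g, 0 < normc g -> P g -> Q g) -> near0 P -> near0 Q.
Proof. by move=> PQ [d d0 Pd]; exists d => // g /[dup] /andP[g0 _] /Pd; apply: PQ. Qed.

Lemma near0_small (e : R) : 0 < e -> near0 (fun g => normc g <= e).
Proof. by exists e => // g /andP[_ /ltW]. Qed.

Lemma bigO0D f h : bigO0 f -> bigO0 h -> bigO0 (fun g => f g + h g).
Proof.
move=> [K1 K1_ge0 f1] [K2 K2_ge0 h2]; exists (K1 + K2); first exact: addr_ge0.
apply: near0_mono (near0_and f1 h2) => g _ [fg hg].
by rewrite mulrDl; apply: le_trans (normcD _ _) (lerD fg hg).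
Qed.

Lemma bigO0_near_eq f h : bigO0 h -> near0 (fun g => f g = h g) -> bigO0 f.
Proof.
move=> [K K0 hK] fh; exists K => //.
by apply: near0_mono (near0_and fh hK) => g _ [->].
Qed.

Lemma normc_range (g : R[i]) (d : R) : (0 < `|g| < d%:C) = (0 < normc g < d).
Proof. by rewrite normcE !ltcR. Qed.

Lemma bigO0P f : bigO0 f <-> exists d K : R, 0 < d /\ 0 <= K /\
  forall g, 0 < `|g| < d%:C -> `|f g| <= K%:C * `|g|.
Proof.
have bound g K : (`|f g| <= K%:C * `|g|) = (normc (f g) <= K * normc g).
  by rewrite !normcE -rmorphM lecR.
split=> [[K K0 [d d0 fK]]|[d [K [d0 [K0 fK]]]]].
  by exists d, K; do 2!split=> //; move=> g; rewrite normc_range bound => /fK.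
by exists K => //; exists d => // g; rewrite -normc_range -bound => /fK.
Qed.

Lemma bigO0_bounded y x0 : bigO0 (fun g => y g - x0) ->
  exists2 B : R, 0 <= B & near0 (fun g => normc (y g) <= B).
Proof.
move=> [K K0 yK]; exists (normc x0 + K); first by rewrite addr_ge0 ?normc_ge0.
apply: near0_mono (near0_and yK (near0_small ltr01)) => g _ [yx g1].
rewrite -(subrK x0 (y g)) addrC; apply: le_trans (normcD _ _) _.
by rewrite lerD2l (le_trans yx) // ler_piMr.
Qed.

End BigONearZero.

Section DchiNearZero.
Variables (R : rcfType) (n : nat) (m : 'I_n -> nat) (z : 'I_n -> R[i]).
Variable l : 'I_n -> nat -> R[i].
Implicit Types y o : R[i] -> R[i].

Lemma bigO0_dchi_near y x0 : ~ is_pole z x0 -> bigO0 (fun g => y g - x0) ->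
  bigO0 (fun g => dchi m z l (y g) - dchi m z l x0).
Proof.
move=> x0z [K K0 yK].
pose r := \big[Num.min/1]_a normc (x0 - z a).
have r0 : 0 < r.
  apply/bigmin_gtP; split=> // a _; rewrite normc_gt0 subr_eq0.
  by apply/eqP => x0za; apply: x0z; exists a.
have x0_far a : r <= normc (x0 - z a) by exact: bigmin_le.
have [L L0 Lip] := dchi_lipschitz m z l (divr_gt0 r0 (ltr0n _ 2)).
exists (L * K); first exact: mulr_ge0.
have small : 0 < r / (2 * (K + 1)) by rewrite divr_gt0 ?mulr_gt0 ?ltr0n ?ltr_wpDl.
apply: near0_mono (near0_and yK (near0_small small)) => g g0 /= [yx gs].
rewrite ler_pdivlMr ?mulr_gt0 ?ltr0n ?ltr_wpDl // in gs.
have y_close : normc (y g - x0) <= r / 2 by lra.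
have y_far a : r / 2 <= normc (y g - z a).
  have := normcD (x0 - y g) (y g - z a); rewrite addrA subrK (distcC x0 (y g)).
  by have := x0_far a; lra.
have x0_far' a : r / 2 <= normc (x0 - z a) by have := x0_far a; lra.
apply: le_trans (Lip _ _ y_far x0_far') _.
by rewrite -mulrA ler_wpM2l.
Qed.

Lemma bigO0_dchi_far y x0 o : bigO0 (fun g => y g - x0) ->
  (forall g, normc (o g - y g) = (normc g)^-1) -> bigO0 (fun g => dchi m z l (o g)).
Proof.
move=> yx oy; have [B B0 yB] := bigO0_bounded yx.
pose Z := \big[Num.max/0]_a normc (z a).
have Z0 : 0 <= Z by apply/bigmax_geP; left.
have z_le a : normc (z a) <= Z by exact: le_bigmax.
have [D D0 Dec] := dchi_decay m z l.
exists (D * 4); first by rewrite mulr_ge0.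
have small : 0 < (B + Z + 1)^-1 / 2 by rewrite divr_gt0 ?invr_gt0 ?ltr_wpDl ?addr_ge0.
apply: near0_mono (near0_and yB (near0_small small)) => g g0 /= [yb gs].
rewrite ler_pdivlMr // in gs.
pose rho := (2 * normc g)^-1.
have rho_ge : B + Z + 1 <= rho.
  by rewrite -[B + Z + 1]invrK lef_pV2 ?posrE ?invr_gt0 ?ltr_wpDl ?addr_ge0 ?mulr_gt0 // mulrC.
have g_inv : (normc g)^-1 = 2 * rho by rewrite /rho invfM mulrA mulfV ?mul1r ?pnatr_eq0.
have o_far a : rho <= normc (o g - z a).
  have := normcD (o g - z a) (z a - y g); rewrite addrA subrK oy g_inv.
  have := normcD (z a) (- y g); rewrite normcN.
  by have := z_le a; lra.
apply: le_trans (Dec _ rho _ o_far) _; first by lra.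
have g1 : normc g <= 1.
  have : (B + Z + 1)^-1 <= 1 by rewrite invf_le1 ?ltr_wpDl ?lerDr ?addr_ge0.
  by lra.
rewrite invrK -mulrA ler_wpM2l // exprMn.
by nra.
Qed.

End DchiNearZero.

Theorem lemmaC3 (R : realType) (linf : R[i])
  (n1 n2 : nat)
  (m1 : 'I_n1 -> nat) (z1 : 'I_n1 -> R[i]) (l1 : 'I_n1 -> nat -> R[i])
  (m2 : 'I_n2 -> nat) (z2 : 'I_n2 -> R[i]) (l2 : 'I_n2 -> nat -> R[i])
  (zeta1 : 'I_(total_mult m1) -> R[i]) (zeta2 : 'I_(total_mult m2) -> R[i]) :
  linf != 0 ->
  (forall a, (1 <= m1 a)%N) -> (forall a, (1 <= m2 a)%N) ->
  injective z1 -> injective z2 ->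
  (forall a, l1 a (m1 a).-1 != 0) -> (forall a, l2 a (m2 a).-1 != 0) ->
  (* zeta1 enumerates the zeros of phi_1 = chi_1 - linf, all simple *)
  injective zeta1 ->
  (forall i, ~ is_pole z1 (zeta1 i)) ->
  (forall i, chi m1 z1 l1 (zeta1 i) - linf = 0) ->
  (forall x, ~ is_pole z1 x -> chi m1 z1 l1 x - linf = 0 ->
     exists i, x = zeta1 i) ->
  (forall i, derive1 (fun x => chi m1 z1 l1 x - linf) (zeta1 i) != 0) ->
  (* zeta2 enumerates the zeros of phi_2 = chi_2 - linf, all simple *)
  injective zeta2 ->
  (forall i, ~ is_pole z2 (zeta2 i)) ->
  (forall i, chi m2 z2 l2 (zeta2 i) - linf = 0) ->
  (forall x, ~ is_pole z2 x -> chi m2 z2 l2 x - linf = 0 ->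
     exists i, x = zeta2 i) ->
  (forall i, derive1 (fun x => chi m2 z2 l2 x - linf) (zeta2 i) != 0) ->
  let phig := fun (g x : R[i]) =>
    chi m1 z1 l1 x + chi m2 z2 l2 (x - g^-1) - linf in
  let poleg := fun (g x : R[i]) => is_pole z1 x \/ is_pole z2 (x - g^-1) in
  (* zeros labelled i <= M_1 *)
  (forall (i : 'I_(total_mult m1)) (zeta : R[i] -> R[i]),
     (exists d K : R, 0 < d /\ 0 <= K /\ forall g : R[i], 0 < `|g| < d%:C ->
        ~ poleg g (zeta g) /\ phig g (zeta g) = 0 /\
        `|zeta g - zeta1 i| <= K%:C * `|g|) ->
     exists d K : R, 0 < d /\ 0 <= K /\ forall g : R[i], 0 < `|g| < d%:C ->
       `|derive1 (phig g) (zeta g)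
          - derive1 (fun x => chi m1 z1 l1 x - linf) (zeta1 i)| <= K%:C * `|g|)
  /\
  (* zeros labelled M_1 < i <= M *)
  (forall (i : 'I_(total_mult m2)) (zeta : R[i] -> R[i]),
     (exists d K : R, 0 < d /\ 0 <= K /\ forall g : R[i], 0 < `|g| < d%:C ->
        ~ poleg g (zeta g) /\ phig g (zeta g) = 0 /\
        `|zeta g - (g^-1 + zeta2 i)| <= K%:C * `|g|) ->
     exists d K : R, 0 < d /\ 0 <= K /\ forall g : R[i], 0 < `|g| < d%:C ->
       `|derive1 (phig g) (zeta g)
          - derive1 (fun x => chi m2 z2 l2 x - linf) (zeta2 i)| <= K%:C * `|g|).
Proof.
move=> _ _ _ _ _ _ _ _ np1 _ _ _ _ np2 _ _ _ phig poleg.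
have derive1_phig g x : ~ poleg g x ->
    derive1 (phig g) x = dchi m1 z1 l1 x + dchi m2 z2 l2 (x - g^-1).
  by move=> /not_orP[xz1 xz2]; apply: derive1_chi_add_shift.
split=> i zeta [d [K [d0 [K0 zetaK]]]];
  have no_pole : near0 (fun g => ~ poleg g (zeta g))
    by exists d => // g; rewrite -normc_range => /zetaK[].
- have zetaO : bigO0 (fun g => zeta g - zeta1 i).
    by apply/bigO0P; exists d, K; do 2!split=> //; move=> g /zetaK[_ []].
  have far g : normc (zeta g - g^-1 - zeta g) = (normc g)^-1.
    by rewrite addrAC subrr sub0r normcN normcV.
  apply/bigO0P/(bigO0_near_eq (bigO0D (bigO0_dchi_near m1 l1 (np1 i) zetaO)
                                      (bigO0_dchi_far m2 z2 l2 zetaO far))).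
  apply: near0_mono no_pole => g _ /derive1_phig ->.
  by rewrite derive1_chi_subr // addrAC.
- have zetaO : bigO0 (fun g => zeta g - g^-1 - zeta2 i).
    apply/bigO0P; exists d, K; do 2!split=> //; move=> g /zetaK[_ []].
    by rewrite opprD addrA.
  have far g : normc (zeta g - (zeta g - g^-1)) = (normc g)^-1.
    by rewrite opprB addrC subrK normcV.
  apply/bigO0P/(bigO0_near_eq (bigO0D (bigO0_dchi_near m2 l2 (np2 i) zetaO)
                                      (bigO0_dchi_far m1 z1 l1 zetaO far))).
  apply: near0_mono no_pole => g _ /derive1_phig ->.
  by rewrite derive1_chi_subr // -addrA addrC.
Qed.
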